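(* Let $\mathsf{k}$ be a field, $n\ge 2$, $R=\mathsf{k}[x_1,\dots,x_r]$, $S=R[t]$, $A=\mathsf{k}[t]/(t^n)$. Let $F_B\in Q_R$ be homogeneous of degree $j_B$ and $B=R/\operatorname{Ann}_R(F_B)$. Put $G_0=F_B$ and let $G_1,\dots,G_{n-1}\in Q_R$ be homogeneous with $\deg G_i=j_B+i$. Let $$F=T^{[n-1]}G_0+T^{[n-2]}G_1+\cdots+T^{[n-1-i]}G_i+\cdots+G_{n-1}\in Q_S,$$ and $C=S/\operatorname{Ann}_S(F)$. Define ideals $I_0\subseteq I_1\subseteq\cdots\subseteq I_{n-1}\subseteq R$ by $I_0=\operatorname{Ann}_R(G_0)$ and $I_i=(I_{i-1}:\operatorname{Ann}_R(G_i))$ for $1\le i\le n-1$. (1) If $I_i\circ G_{n-1-i}\subseteq R\circ F_B$ for all $i=0,\dots,n-1$, then the sequence $\mathsf{k}\to A\xrightarrow{\iota} C\xrightarrow{\pi} B\to\mathsf{k}$ is coexact and $C$ is a free extension with base $A$ and fiber $B$ (via $\iota,\pi$). (2) Conversely, if $C$ is a free extension with base $A$ and fiber $B$ (via $\iota,\pi$), then $I_0\circ G_i\subseteq \sum_{j=0}^{i-1}R\circ G_j$ for every $i\in[1,n-1]$.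
   Context: All rings are graded; $R$ standard graded. $Q_R=\mathsf{k}_{DP}[X_1,\dots,X_r]$ and $Q_S=\mathsf{k}_{DP}[X_1,\dots,X_r,T]$ are divided power rings (basis of divided monomials $X^{[a]}=X_1^{[a_1]}\cdots$, with $X_k^{[i]}X_k^{[j]}=\binom{i+j}{j}X_k^{[i+j]}$), on which $R$ (resp. $S$) acts by contraction: $x_i^s\circ X_i^{[k]}=X_i^{[k-s]}$ if $k\ge s$ and $0$ otherwise, $x_i$ acting trivially on the other variables, and similarly $t$ on $T$. For $G\in Q_R$, $R\circ G$ is the $R$-submodule generated by $G$ and $\operatorname{Ann}_R(G)=\{g\in R: g\circ G=0\}$. For ideals, $(I:J)=\{f\in R: fJ\subseteq I\}$. The map $\iota:A\to C$ is induced by the inclusion $\mathsf{k}[t]\subset S$ and $\pi:C\to B$ by $S\to R$, $x_i\mapsto x_i$, $t\mapsto 0$. For graded Artinian algebras $A,B,C$ with maps $\iota:A\to C$, $\pi:C\to B$, $C$ is a free extension with base $A$ and fiber $B$ if $\iota$ makes $C$ a free $A$-module and $\pi$ is surjective with $\ker\pi=(\iota(A_+))C$, where $A_+$ is the ideal of positive-degree elements; the sequence $\mathsf{k}\to A\to C\to B\to\mathsf{k}$ is coexact if $\pi$ is surjective and $\ker\pi=(\iota(A_+))C$. *)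

From HB Require Import structures.
From mathcomp Require Import all_boot all_order all_algebra.
From mathcomp Require Import mpoly.
Set Implicit Arguments. Unset Strict Implicit. Unset Printing Implicit Defensive.
Import GRing.Theory.
Local Open Scope ring_scope.

Section Defs.
Variable k : fieldType.

(* The divided power ring k_DP[X_1..X_n] is modelled on the k-vector space
   {mpoly k[n]}: the monomial 'X_[a] stands for the divided monomial X^[a].
   (Only the k-vector space structure, the contraction action and products
   of divided monomials in disjoint sets of variables are used below.) *)

Definition contract_mon {n} (m : 'X_{1..n}) (G : {mpoly k[n]}) : {mpoly k[n]} :=
  \sum_(a <- msupp G | (m <= a)%MM) G@_a *: 'X_[(a - m)%MM].

Definition contract {n} (g G : {mpoly k[n]}) : {mpoly k[n]} :=
  \sum_(m <- msupp g) g@_m *: contract_mon m G.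

Definition Ann {n} (G : {mpoly k[n]}) (g : {mpoly k[n]}) : Prop := contract g G = 0.

Definition homog_of {n} (d : nat) (p : {mpoly k[n]}) : bool :=
  all [pred m | mdeg m == d] (msupp p).

Variable r : nat.
Local Notation R := {mpoly k[r]}.
Local Notation S := {mpoly k[r.+1]}.

(* the extra variable t of S = R[t] (and T of Q_S) is the last variable *)
Definition tvar : S := 'X_ord_max.

(* R -> S inclusion, also Q_R -> Q_S *)
Definition liftS (p : R) : S := mwiden p.

(* S -> R, x_i |-> x_i, t |-> 0 *)
Definition setT0 (phi : S) : R :=
  phi \mPo [tuple (if unlift ord_max i is Some j then 'X_j else 0 : R) | i < r.+1].

Definition kt_to_S (p : {poly k}) : S := \sum_(i < size p) p`_i *: tvar ^+ i.

Definition Fpoly (n : nat) (G : nat -> R) : S :=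
  \sum_(i < n) tvar ^+ (n - 1 - i) * liftS (G i).

Fixpoint Ichain (G : nat -> R) (i : nat) : R -> Prop :=
  match i with
  | 0 => fun f => Ann (G 0%N) f
  | i'.+1 => fun f => forall g, Ann (G i'.+1) g -> Ichain G i' (f * g)
  end.

(* A = k[t]/(t^n), C = S/Ann_S(F), B = R/Ann_R(FB); iota : A -> C, pi : C -> B.
   Coexactness: pi surjective and ker pi = (iota(A_+)) C, unfolded on representatives.
   A_+ = classes of polynomials with zero constant term. *)
Definition coexact (F : S) (FB : R) : Prop :=
  (forall g : R, exists phi : S, Ann FB (setT0 phi - g)) /\
  (forall phi : S, Ann FB (setT0 phi) <->
     exists (m : nat) (a : 'I_m -> {poly k}) (c : 'I_m -> S),
       (forall j, (a j)`_0 = 0) /\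
       Ann F (phi - \sum_(j < m) kt_to_S (a j) * c j)).

(* C is a free A-module via iota: a basis (c_i)_{i in I} of C over A,
   with finitely supported coefficient families. *)
Definition free_over_A (n : nat) (F : S) : Prop :=
  exists (I : eqType) (s : I -> S),
    (forall phi : S, exists (l : seq I) (a : I -> {poly k}),
        Ann F (phi - \sum_(i <- l) kt_to_S (a i) * s i)) /\
    (forall (l : seq I) (a : I -> {poly k}), uniq l ->
        Ann F (\sum_(i <- l) kt_to_S (a i) * s i) ->
        forall i, i \in l -> ('X^n %| a i)%R).

Definition free_extension (n : nat) (F : S) (FB : R) : Prop :=
  free_over_A n F /\ coexact F FB.

End Defs.

From HB Require Import structures.
From mathcomp Require Import all_boot all_order all_algebra.
From mathcomp Require Import mpoly.
From mathcomp Require Import zify.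
From Stdlib Require Import ClassicalEpsilon.
Set Implicit Arguments. Unset Strict Implicit. Unset Printing Implicit Defensive.
Import GRing.Theory.
Local Open Scope ring_scope.

(* Write Phi in S as \sum_j t^j phi_j with phi_j in R.  The coefficient of
   T^[n-1-d] in Phi o F is \sum_(j <= d) phi_j o G_(d-j), so Phi annihilates F
   iff this triangular system vanishes for d < n.

   (1) An f in Ann(G_0) lifts to an element of Ann(F) with constant term f:
   solve the system degree by degree.  The d-th equation puts phi_j in the ideal
   I_j, so by hypothesis phi_j o G_(d+1-j) lies in R o G_0 and equation d+1 can be
   solved for phi_(d+1).  Hence ker pi = tC, which is coexactness.  A set of
   monomials whose classes form a k-basis of B lifts to an A-basis of C: it spans
   by descending induction on the power of t (as t^n o F = 0), and it is free
   because the triangular system kills the coefficients of t^0, ..., t^(n-1) one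
   after the other.

   (2) By coexactness f in I_0 lifts to an element of Ann(F) with constant term
   f, and its i-th equation writes f o G_i in \sum_(j < i) R o G_j. *)

Section Contraction.
Variables (k : fieldType) (n : nat).
Local Notation P := {mpoly k[n]}.
Implicit Types (p g h G H : P) (m b : 'X_{1..n}) (phi psi : 'X_{1..n} -> k).

Lemma mcoeffMX_if p m mu : (p * 'X_[m])@_mu = if (m <= mu)%MM then p@_(mu - m) else 0.
Proof.
case: ifP => h; first by rewrite -{1}(submK h) addmC mcoeffMX.
apply: memN_msupp_eq0; rewrite (perm_mem (msuppMX _ _)).
by apply/mapP => -[m' _ e]; move: h; rewrite e lem_addr.
Qed.

Definition msum phi p : k := \sum_(m <- msupp p) p@_m * phi m.

Lemma msum_wide phi p (s : seq 'X_{1..n}) :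
  uniq s -> {subset msupp p <= s} -> msum phi p = \sum_(m <- s) p@_m * phi m.
Proof.
move=> us sub; rewrite /msum [RHS](bigID (mem (msupp p))) /=.
rewrite [X in _ = _ + X]big1 ?addr0; last by move=> m /memN_msupp_eq0 ->; rewrite mul0r.
rewrite -[RHS]big_filter; apply: perm_big; apply: uniq_perm; rewrite ?filter_uniq ?msupp_uniq //.
by move=> m; rewrite mem_filter; case: (boolP (m \in msupp p)) => // /sub ->.
Qed.

Lemma msum_is_linear phi : linear_for *%R (msum phi).
Proof.
move=> c p q; set s := undup (msupp p ++ msupp q ++ msupp (c *: p + q)).
have sub x : {subset msupp x <= msupp p ++ msupp q ++ msupp (c *: p + q)} ->
    {subset msupp x <= s} by move=> h m /h; rewrite mem_undup.
rewrite !(@msum_wide _ _ s) ?undup_uniq //;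
  try by apply: sub => m hm; rewrite !mem_cat hm ?orbT.
rewrite mulr_sumr -big_split; apply: eq_bigr => m _.
by rewrite mcoeffD mcoeffZ mulrDl mulrA.
Qed.

HB.instance Definition _ phi :=
  GRing.isLinear.Build k P k *%R (msum phi) (msum_is_linear phi).

Lemma msumX phi m : msum phi 'X_[m] = phi m.
Proof. by rewrite /msum msuppX big_seq1 mcoeffX eqxx mul1r. Qed.

Lemma msum_delta p b : msum (fun m => (m == b)%:R) p = p@_b.
Proof.
rewrite {2}[p]mpolyE raddf_sum /=; apply: eq_bigr => m _.
by rewrite mcoeffZ mcoeffX.
Qed.

Lemma eq_msum phi psi p : phi =1 psi -> msum phi p = msum psi p.
Proof. by move=> e; apply: eq_bigr => m _; rewrite e. Qed.

Lemma msumDf phi psi p : msum (fun m => phi m + psi m) p = msum phi p + msum psi p.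
Proof. by rewrite -big_split; apply: eq_bigr => m _; rewrite mulrDr. Qed.

Lemma msumZf c phi p : msum (fun m => c * phi m) p = c * msum phi p.
Proof. by rewrite /msum mulr_sumr; apply: eq_bigr => m _; rewrite mulrCA. Qed.

Lemma mcoeff_contract_mon m G b : (contract_mon m G)@_b = G@_(m + b).
Proof.
rewrite /contract_mon raddf_sum /= -(msum_delta G (m + b)) /msum -big_filter.
rewrite [RHS](bigID (fun a => (m <= a)%MM)) /= [X in _ = _ + X]big1 ?addr0.
  rewrite big_filter; apply: eq_bigr => a ma; rewrite mcoeffZ mcoeffX.
  by rewrite -(eqm_add2r m) submK // addmC.
move=> a /negbTE ma; case: eqP => [ea|]; last by rewrite mulr0.
by move: ma; rewrite ea lem_addr.
Qed.

Lemma mcoeff_contract g G b : (contract g G)@_b = msum (fun m => G@_(m + b)) g.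
Proof.
rewrite /contract raddf_sum /=; apply: eq_bigr => m _.
by rewrite mcoeffZ mcoeff_contract_mon.
Qed.

Lemma contract_is_linear g : linear (contract g).
Proof.
move=> c G H; apply/mpolyP => b; rewrite mcoeffD mcoeffZ !mcoeff_contract.
by rewrite -msumZf -msumDf; apply: eq_msum => m; rewrite mcoeffD mcoeffZ.
Qed.

HB.instance Definition _ g :=
  GRing.isLinear.Build k P P *:%R (contract g) (contract_is_linear g).

Lemma contractDl g h G : contract (g + h) G = contract g G + contract h G.
Proof. by apply/mpolyP => b; rewrite mcoeffD !mcoeff_contract raddfD. Qed.

Lemma contractZl c g G : contract (c *: g) G = c *: contract g G.
Proof. by apply/mpolyP => b; rewrite mcoeffZ !mcoeff_contract linearZ. Qed.

Lemma contract0l G : contract 0 G = 0.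
Proof. by apply/mpolyP => b; rewrite mcoeff0 mcoeff_contract raddf0. Qed.

Lemma contractNl g G : contract (- g) G = - contract g G.
Proof. by rewrite -scaleN1r contractZl scaleN1r. Qed.

Lemma contractBl g h G : contract (g - h) G = contract g G - contract h G.
Proof. by rewrite contractDl contractNl. Qed.

Lemma contract_suml (I : Type) (s : seq I) (F : I -> P) G :
  contract (\sum_(i <- s) F i) G = \sum_(i <- s) contract (F i) G.
Proof.
by elim: s => [|x s IH]; rewrite ?big_nil ?contract0l // !big_cons contractDl IH.
Qed.

Lemma contractXX m1 m2 G : contract 'X_[m1 + m2] G = contract 'X_[m1] (contract 'X_[m2] G).
Proof.
apply/mpolyP => b; rewrite !mcoeff_contract !msumX mcoeff_contract msumX.
by rewrite addmA [(m1 + m2)%MM]addmC.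
Qed.

Lemma contractM g h G : contract (g * h) G = contract g (contract h G).
Proof.
have contractXM m q : contract ('X_[m] * q) G = contract 'X_[m] (contract q G).
  elim/mpolyind: q => [|c m' q _ _ IH]; first by rewrite mulr0 !contract0l raddf0.
  rewrite mulrDr -scalerAr !contractDl !contractZl linearD linearZ /= IH.
  by rewrite -mpolyXD contractXX.
elim/mpolyind: g => [|c m p _ _ IH]; first by rewrite mul0r !contract0l.
by rewrite mulrDl -scalerAl !contractDl !contractZl IH contractXM.
Qed.

Lemma contractC f g G : contract f (contract g G) = contract g (contract f G).
Proof. by rewrite -!contractM mulrC. Qed.

Lemma Ann_mull f g G : Ann G g -> Ann G (f * g).
Proof. by rewrite /Ann contractM => ->; rewrite raddf0. Qed.

Lemma AnnD f g G : Ann G f -> Ann G g -> Ann G (f + g).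
Proof. by rewrite /Ann contractDl => -> ->; rewrite addr0. Qed.

End Contraction.

Section LastVariable.
Variables (k : fieldType) (r : nat).
Local Notation R := {mpoly k[r]}.
Local Notation S := {mpoly k[r.+1]}.
Local Notation t := (tvar k r).
Local Notation widen := (widen_ord (leqnSn r)).
Implicit Types (a : 'X_{1..r}) (mu nu : 'X_{1..r.+1}) (f g G : R) (Phi Psi : S).

Definition mnm_belast mu : 'X_{1..r} := [multinom mu (widen i) | i < r].
Definition mnm_rcons a (j : nat) : 'X_{1..r.+1} := (mnmwiden a + U_(ord_max) *+ j)%MM.

Lemma mnmUn_lastE j (i : 'I_r.+1) :
  (U_(@ord_max r) *+ j)%MM i = if i == ord_max then j else 0%N.
Proof. by rewrite mulmnE mnm1E eq_sym; case: eqP => _; rewrite ?mul1n ?mul0n. Qed.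

Lemma widen_neq_ord_max (i : 'I_r) : (widen i == ord_max) = false.
Proof. by apply/negbTE; rewrite -val_eqE /= neq_ltn ltn_ord. Qed.

Lemma mnm_belastE mu (i : 'I_r) : mnm_belast mu i = mu (widen i).
Proof. by rewrite mnmE. Qed.

Lemma mnm_rcons_last a j : mnm_rcons a j ord_max = j.
Proof. by rewrite mnmDE mnmwiden_ordmax mnmUn_lastE eqxx. Qed.

Lemma mnm_belast_rcons a j : mnm_belast (mnm_rcons a j) = a.
Proof.
apply/mnmP => i.
by rewrite mnm_belastE mnmDE mnmwiden_widen mnmUn_lastE widen_neq_ord_max addn0.
Qed.

Lemma mnm_rcons_belast mu : mnm_rcons (mnm_belast mu) (mu ord_max) = mu.
Proof.
apply/mnmP => i; rewrite mnmDE mnmUn_lastE.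
have [->|ne] := eqVneq i ord_max; first by rewrite mnmwiden_ordmax.
have lt : (i < r)%N by move: ne (ltn_ord i); rewrite -val_eqE /= ltnS; lia.
have -> : i = widen (Ordinal lt) by apply: val_inj.
by rewrite mnmwiden_widen mnm_belastE addn0.
Qed.

Lemma mnm_belastD mu nu : mnm_belast (mu + nu) = (mnm_belast mu + mnm_belast nu)%MM.
Proof. by apply/mnmP => i; rewrite mnmDE !mnm_belastE mnmDE. Qed.

Lemma eq_mnm_rcons mu a j :
  (mu == mnm_rcons a j) = (mu ord_max == j) && (mnm_belast mu == a).
Proof.
apply/eqP/andP => [->|[/eqP <- /eqP <-]]; last by rewrite mnm_rcons_belast.
by rewrite mnm_rcons_last mnm_belast_rcons.
Qed.

Lemma tvarX j : t ^+ j = 'X_[U_(@ord_max r) *+ j].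
Proof. by rewrite /tvar mpolyXn. Qed.

Lemma mnmUn_last_le j mu : ((U_(@ord_max r) *+ j)%MM <= mu)%MM = (j <= mu ord_max)%N.
Proof.
apply/mnm_lepP/idP => [h|h i]; first by move: (h ord_max); rewrite mnmUn_lastE eqxx.
by rewrite mnmUn_lastE; case: eqP => [->|].
Qed.

Lemma mcoeff_liftS g mu :
  (liftS g)@_mu = if mu ord_max == 0%N then g@_(mnm_belast mu) else 0.
Proof.
have -> : liftS g = \sum_(a <- msupp g) g@_a *: 'X_[mnmwiden a].
  rewrite [g in LHS]mpolyE /liftS raddf_sum /=.
  by apply: eq_bigr => a _; rewrite mwidenZ mwidenX.
rewrite raddf_sum /=.
rewrite (eq_bigr (fun a => g@_a * (mnmwiden a == mu)%:R)); last first.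
  by move=> a _; rewrite mcoeffZ mcoeffX.
case: eqP => [h|h].
  rewrite -{1}(mnm_rcons_belast mu) h /mnm_rcons mulm0n addm0 -msum_delta.
  by apply: eq_bigr => a _; rewrite inj_eq //; exact: inj_mnmwiden.
rewrite big1 // => a _; case: eqP => [ea|]; last by rewrite mulr0.
by case: h; rewrite -ea mnmwiden_ordmax.
Qed.

Lemma mcoeff_tliftS j g mu :
  (t ^+ j * liftS g)@_mu = if mu ord_max == j then g@_(mnm_belast mu) else 0.
Proof.
rewrite mulrC tvarX mcoeffMX_if mnmUn_last_le.
case: leqP => h; last by case: eqP => // e; move: h; rewrite e ltnn.
rewrite mcoeff_liftS mnmBE mnmUn_lastE eqxx.
have -> : mnm_belast (mu - U_(@ord_max r) *+ j) = mnm_belast mu.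
  by apply/mnmP => i; rewrite !mnm_belastE mnmBE mnmUn_lastE widen_neq_ord_max subn0.
by congr (if _ then _ else _); apply/eqP/eqP; lia.
Qed.

Lemma tliftS_expand j g : t ^+ j * liftS g = \sum_(a <- msupp g) g@_a *: 'X_[mnm_rcons a j].
Proof.
rewrite [g in LHS]mpolyE /liftS raddf_sum /= mulr_sumr; apply: eq_bigr => a _.
by rewrite mwidenZ mwidenX -scalerAr tvarX -mpolyXD /mnm_rcons addmC.
Qed.

Definition tcoef (j : nat) Phi : R :=
  \sum_(mu <- msupp Phi | mu ord_max == j) Phi@_mu *: 'X_[mnm_belast mu].
Arguments tcoef : simpl never.

Lemma mcoeff_tcoef j Phi a : (tcoef j Phi)@_a = Phi@_(mnm_rcons a j).
Proof.
rewrite /tcoef raddf_sum /= big_mkcond /= -msum_delta; apply: eq_bigr => mu _.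
rewrite eq_mnm_rcons; case: eqP => _ /=; last by rewrite mulr0.
by rewrite mcoeffZ mcoeffX eq_sym.
Qed.

Lemma tcoef_is_linear j : linear (tcoef j).
Proof.
by move=> c Phi Psi; apply/mpolyP => a; rewrite mcoeffD mcoeffZ !mcoeff_tcoef mcoeffD mcoeffZ.
Qed.

HB.instance Definition _ j :=
  GRing.isLinear.Build k S R *:%R (tcoef j) (tcoef_is_linear j).

Lemma tcoef_tliftS m j g : tcoef m (t ^+ j * liftS g) = if j == m then g else 0.
Proof.
apply/mpolyP => a; rewrite mcoeff_tcoef mcoeff_tliftS mnm_rcons_last mnm_belast_rcons eq_sym.
by case: eqP; rewrite ?mcoeff0.
Qed.

Lemma tcoef0_liftS f : tcoef 0 (liftS f) = f.
Proof. by rewrite -(mul1r (liftS f)) -(expr0 t) tcoef_tliftS. Qed.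

Lemma tcoef0_tmul Psi : tcoef 0 (t * Psi) = 0.
Proof.
apply/mpolyP => a; rewrite mcoeff_tcoef mcoeff0 mulrC mcoeffMX_if.
by rewrite lep1mP mnm_rcons_last eqxx.
Qed.

Lemma tcoef_eq0 Phi : (forall j, tcoef j Phi = 0) -> Phi = 0.
Proof.
move=> h; apply/mpolyP => mu.
by rewrite mcoeff0 -{1}(mnm_rcons_belast mu) -mcoeff_tcoef h mcoeff0.
Qed.

Lemma tcoef_expansion Phi N : (msize Phi <= N)%N ->
  Phi = \sum_(j < N) t ^+ j * liftS (tcoef j Phi).
Proof.
move=> hN; apply/mpolyP => mu; rewrite raddf_sum /=.
under eq_bigr do rewrite mcoeff_tliftS mcoeff_tcoef.
case: (ltnP (mu ord_max) N) => hmu.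
  rewrite (bigD1 (Ordinal hmu)) //= eqxx mnm_rcons_belast big1 ?addr0 // => j.
  by rewrite -val_eqE /= eq_sym => /negbTE ->.
rewrite big1 => [|j _]; last first.
  by rewrite ifF //; apply/eqP => e; move: hmu; rewrite e leqNgt ltn_ord.
apply: memN_msupp_eq0; apply: msize_mdeg_ge; apply: (leq_trans hN); apply: (leq_trans hmu).
by rewrite -{2}(mnm_rcons_belast mu) /mnm_rcons mdegD mdegMn mdeg1 mul1n leq_addl.
Qed.

Lemma tcoef0_split Phi : exists Psi, Phi = liftS (tcoef 0 Phi) + t * Psi.
Proof.
exists (\sum_(i < msize Phi) t ^+ i * liftS (tcoef i.+1 Phi)).
rewrite mulr_sumr; under eq_bigr do rewrite mulrA -exprS.
by rewrite {1}(@tcoef_expansion Phi (msize Phi).+1) // big_ord_recl expr0 mul1r.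
Qed.

Lemma setT0E Phi : setT0 Phi = tcoef 0 Phi.
Proof.
have setT0X mu :
    'X_[mu] \mPo [tuple (if unlift ord_max i is Some j then 'X_j else 0 : R) | i < r.+1]
    = (mu ord_max == 0%N)%:R * 'X_[mnm_belast mu].
  rewrite comp_mpolyX big_ord_recr /= tnth_mktuple unlift_none expr0n mulrC.
  congr (_ * _); rewrite mpolyXE_id; apply: eq_bigr => i _.
  rewrite tnth_mktuple mnm_belastE.
  have -> : widen i = lift ord_max i by apply: val_inj; rewrite /= /bump leqNgt ltn_ord.
  by rewrite liftK.
apply/mpolyP => a; rewrite mcoeff_tcoef /setT0 comp_mpolyEX raddf_sum /=.
rewrite -msum_delta /msum; apply: eq_bigr => mu _.
rewrite setT0X mcoeffZ mulrnAl mul1r mcoeffMn mcoeffX eq_mnm_rcons.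
by case: eqP => _; case: eqP => _; rewrite ?mulr0n ?mulr1n.
Qed.

Lemma contract_tliftS j m g G :
  contract (t ^+ j * liftS g) (t ^+ m * liftS G) =
  if (j <= m)%N then t ^+ (m - j) * liftS (contract g G) else 0.
Proof.
apply/mpolyP => nu; rewrite mcoeff_contract (tliftS_expand j g) raddf_sum /=.
under eq_bigr do rewrite linearZ /= msumX mcoeff_tliftS mnmDE mnm_rcons_last
  mnm_belastD mnm_belast_rcons.
case: leqP => h; last first.
  by rewrite mcoeff0 big1 // => a _; rewrite ifF ?mulr0 //; apply/eqP; lia.
rewrite mcoeff_tliftS.
have -> : (j + nu ord_max == m)%N = (nu ord_max == m - j)%N by apply/eqP/eqP; lia.
case: eqP => _; last by rewrite big1 // => a _; rewrite mulr0.
by rewrite mcoeff_contract.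
Qed.

Lemma kt_to_S_wide (p : {poly k}) N : (size p <= N)%N ->
  kt_to_S r p = \sum_(i < N) p`_i *: t ^+ i.
Proof.
move=> h; rewrite /kt_to_S (big_ord_widen N (fun i => p`_i *: t ^+ i)) //.
rewrite big_mkcond /=; apply: eq_bigr => i _.
by case: ltnP => // hi; rewrite nth_default // scale0r.
Qed.

Lemma kt_to_S_is_linear : linear (@kt_to_S k r).
Proof.
move=> c p q; set N := maxn (size p) (size q).
have hsz (x : {poly k}) : (size x <= N)%N -> kt_to_S r x = \sum_(i < N) x`_i *: t ^+ i.
  exact: kt_to_S_wide.
rewrite !hsz ?leq_maxl ?leq_maxr //; last first.
  apply: leq_trans (size_polyD _ _) _; rewrite geq_max leq_maxr andbT.
  by apply: leq_trans (size_scale_leq _ _) _; rewrite leq_maxl.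
rewrite scaler_sumr -big_split; apply: eq_bigr => i _.
by rewrite coefD coefZ scalerDl scalerA.
Qed.

HB.instance Definition _ :=
  GRing.isLinear.Build k {poly k} S *:%R (@kt_to_S k r) kt_to_S_is_linear.

Lemma kt_to_S_monomial (c : k) j : kt_to_S r (c *: 'X^j) = c *: t ^+ j.
Proof.
rewrite (@kt_to_S_wide _ j.+1); last first.
  by apply: leq_trans (size_scale_leq _ _) _; rewrite size_polyXn.
rewrite big_ord_recr /= big1 ?add0r; first by rewrite coefZ coefXn eqxx mulr1.
by move=> i _; rewrite coefZ coefXn ltn_eqF // mulr0 scale0r.
Qed.

Lemma kt_to_SX : kt_to_S r 'X = t.
Proof. by rewrite -['X]scale1r -['X]expr1 kt_to_S_monomial scale1r expr1. Qed.

Lemma tcoef0_kt_to_S (p : {poly k}) Phi : p`_0 = 0 -> tcoef 0 (kt_to_S r p * Phi) = 0.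
Proof.
move=> p0; rewrite (@kt_to_S_wide _ (size p).+1) // big_ord_recl /= p0 scale0r add0r.
rewrite (eq_bigr (fun i : 'I_(size p) => t * (p`_i.+1 *: t ^+ i))); last first.
  by move=> i _; rewrite -scalerAr -exprS.
by rewrite -mulr_sumr -mulrA tcoef0_tmul.
Qed.

Lemma tcoef0_subr_kt_comb m (a : 'I_m -> {poly k}) (c : 'I_m -> S) Phi :
  (forall j, (a j)`_0 = 0) -> tcoef 0 (Phi - \sum_(j < m) kt_to_S r (a j) * c j) = tcoef 0 Phi.
Proof.
move=> a0; rewrite raddfB /= (raddf_sum (tcoef 0)) big1 ?subr0 // => j _.
exact: tcoef0_kt_to_S.
Qed.

End LastVariable.

Section FpolyAnnihilator.
Variables (k : fieldType) (r n : nat) (G : nat -> {mpoly k[r]}).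
Local Notation R := {mpoly k[r]}.
Local Notation S := {mpoly k[r.+1]}.
Local Notation t := (tvar k r).
Local Notation F := (Fpoly n G).

(* The coefficient of T^[n-1-d] in (\sum_j t^j eta_j) o F. *)
Definition Fcoef (eta : nat -> R) (d : nat) : R :=
  \sum_(j < d.+1) contract (eta j) (G (d - j)%N).

Lemma FcoefS eta d :
  Fcoef eta d.+1 = \sum_(j < d.+1) contract (eta j) (G (d.+1 - j)%N) + contract (eta d.+1) (G 0).
Proof. by rewrite /Fcoef big_ord_recr /= subnn. Qed.

Lemma eq_Fcoef eta eta' d : (forall j, (j <= d)%N -> eta j = eta' j) ->
  Fcoef eta d = Fcoef eta' d.
Proof. by move=> e; apply: eq_bigr => j _; rewrite e // -ltnS. Qed.

Lemma big_ord_sub_pick (V : nmodType) (X : nat -> V) j m :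
  \sum_(i < n | (j <= n - 1 - i)%N && (n - 1 - i - j == m)%N) X i
  = if (j + m < n)%N then X (n - 1 - m - j)%N else 0.
Proof.
case: ltnP => h; last by rewrite big1 // => i /andP [h1 /eqP h2]; have := ltn_ord i; lia.
have hi : (n - 1 - m - j < n)%N by lia.
rewrite (bigD1 (Ordinal hi)) /=; last by apply/andP; split; [|apply/eqP]; lia.
rewrite big1 ?addr0 // => i /andP [/andP [h1 /eqP h2] hne].
by move: hne; rewrite -val_eqE /=; have := ltn_ord i; lia.
Qed.

Lemma tcoef_contract_Fpoly (eta : nat -> R) N m :
  tcoef m (contract (\sum_(j < N) t ^+ j * liftS (eta j)) F) =
  \sum_(j < N | (j + m < n)%N) contract (eta j) (G (n - 1 - m - j)%N).
Proof.
rewrite contract_suml raddf_sum /= [RHS]big_mkcond /=; apply: eq_bigr => j _.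
rewrite /Fpoly (raddf_sum (contract _)) (raddf_sum (tcoef m)) /=.
rewrite -(big_ord_sub_pick (fun i => contract (eta j) (G i))) [RHS]big_mkcond /=.
apply: eq_bigr => i _; rewrite contract_tliftS; case: leqP => h /=; last by rewrite raddf0.
by rewrite tcoef_tliftS.
Qed.

Lemma tcoef_contract_Fpoly_Fcoef (eta : nat -> R) N d : (d < n)%N -> (d < N)%N ->
  tcoef (n - 1 - d)%N (contract (\sum_(j < N) t ^+ j * liftS (eta j)) F) = Fcoef eta d.
Proof.
move=> hdn hdN; rewrite tcoef_contract_Fpoly /Fcoef.
rewrite (big_ord_widen N (fun j => contract (eta j) (G (d - j)%N)) hdN).
apply: eq_big => [j|j hj]; first by apply/idP/idP; lia.
by congr (contract _ (G _)); lia.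
Qed.

Lemma Ann_Fpoly_tsum (eta : nat -> R) N : (n <= N)%N ->
  Ann F (\sum_(j < N) t ^+ j * liftS (eta j)) <-> forall d, (d < n)%N -> Fcoef eta d = 0.
Proof.
move=> hN; split=> [hA d hd|h].
  by rewrite -(@tcoef_contract_Fpoly_Fcoef _ N) ?(leq_trans hd) // hA raddf0.
apply: tcoef_eq0 => m; case: (ltnP m n) => hm.
  have -> : m = (n - 1 - (n - 1 - m))%N by lia.
  by rewrite tcoef_contract_Fpoly_Fcoef ?h //; lia.
by rewrite tcoef_contract_Fpoly big1 // => j hj; lia.
Qed.

Lemma Ann_Fpoly_Fcoef (Phi : S) : Ann F Phi ->
  forall d, (d < n)%N -> Fcoef (fun j => tcoef j Phi) d = 0.
Proof.
move: (@Ann_Fpoly_tsum (fun j => tcoef j Phi) (maxn n (msize Phi)) (leq_maxl _ _)).1.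
by rewrite -tcoef_expansion // leq_maxr.
Qed.

Lemma Ann_Fpoly_tpow j g : (n <= j)%N -> Ann F (t ^+ j * liftS g).
Proof.
move=> hj; rewrite /Ann /Fpoly (raddf_sum (contract _)) /= big1 // => i _.
by rewrite contract_tliftS; case: leqP => //; have := ltn_ord i; lia.
Qed.

End FpolyAnnihilator.

Section IdealChain.
Variables (k : fieldType) (r : nat) (G : nat -> {mpoly k[r]}).
Local Notation R := {mpoly k[r]}.
Implicit Types (f g h : R) (eta : nat -> R).

Lemma Ichain_mulr j f h : Ichain G j f -> Ichain G j (f * h).
Proof.
elim: j f h => [|j IH] f h /=; first by rewrite mulrC; apply: Ann_mull.
by move=> hf g hg; rewrite mulrAC; apply: IH; apply: hf.
Qed.

Lemma Ichain_mono j j' f : (j <= j')%N -> Ichain G j f -> Ichain G j' f.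
Proof.
move=> hj; rewrite -(subnKC hj); elim: (j' - j)%N => [|d IH]; first by rewrite addn0.
by move=> hf; rewrite addnS /= => g _; apply: Ichain_mulr; apply: IH.
Qed.

Lemma Ichain_of_Ann_prod j f :
  (forall g : nat -> R, (forall i, (0 < i <= j)%N -> Ann (G i) (g i)) ->
     Ann (G 0) (f * \prod_(1 <= i < j.+1) g i)) -> Ichain G j f.
Proof.
elim: j f => [|j IH] f h /=.
  by have := h (fun _ => 0) (fun i hi => ltac:(lia)); rewrite big_geq // mulr1.
move=> g0 hg0; apply: IH => g hg.
have := h (fun i => if i == j.+1 then g0 else g i).
rewrite big_nat_recr //= eqxx (@eq_big_nat _ _ _ 1 j.+1 _ g); last first.
  by move=> i hi; rewrite ltn_eqF //; lia.
rewrite -mulrA [g0 * _]mulrC; apply => i hi.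
by case: eqP => [->|ne] //; apply: hg; lia.
Qed.

Lemma contract_prod_Ann (g : nat -> R) J i : (0 < i <= J)%N -> Ann (G i) (g i) ->
  contract (\prod_(1 <= l < J.+1) g l) (G i) = 0.
Proof.
move=> hi hg; have hiJ : i \in index_iota 1 J.+1 by rewrite mem_index_iota; lia.
by rewrite (bigD1_seq i hiJ (iota_uniq _ _)) /= mulrC contractM hg raddf0.
Qed.

(* Multiplying by elements of Ann(G_1), ..., Ann(G_J) kills every other term of
   the J-th equation. *)
Lemma Fcoef_eq0_Ichain eta J : Fcoef G eta J = 0 -> Ichain G J (eta J).
Proof.
move=> heq; apply: Ichain_of_Ann_prod => g hg; rewrite /Ann mulrC contractM.
move: heq; rewrite /Fcoef big_ord_recr /= subnn => /eqP; rewrite addrC addr_eq0 => /eqP ->.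
rewrite raddfN (raddf_sum (contract _)) /= big1 ?oppr0 // => j _.
rewrite contractC contract_prod_Ann ?raddf0 //; first by have := ltn_ord j; lia.
by apply: hg; have := ltn_ord j; lia.
Qed.

End IdealChain.

Section Coexactness.
Variables (k : fieldType) (r n : nat) (G : nat -> {mpoly k[r]}).
Local Notation R := {mpoly k[r]}.
Local Notation S := {mpoly k[r.+1]}.
Local Notation t := (tvar k r).
Local Notation F := (Fpoly n G).
Implicit Types (f g h : R) (eta : nat -> R).

Section ChainHypothesis.
Hypothesis hIchain : forall i, (i < n)%N -> forall f, Ichain G i f ->
  exists h, contract f (G (n - 1 - i)%N) = contract h (G 0).

Lemma Fcoef_step_solvable eta D : (D.+1 < n)%N ->
  (forall d, (d <= D)%N -> Fcoef G eta d = 0) ->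
  exists h, \sum_(j < D.+1) contract (eta j) (G (D.+1 - j)%N) = contract h (G 0).
Proof.
move=> hD heta.
apply: (big_ind (fun x => exists h, x = contract h (G 0))).
- by exists 0; rewrite contract0l.
- by move=> x y [hx ->] [hy ->]; exists (hx + hy); rewrite contractDl.
move=> j _; have hj := ltn_ord j.
have hIj : Ichain G (n - 1 - (D.+1 - j)) (eta j).
  apply: (@Ichain_mono _ _ _ j); first lia.
  by apply: Fcoef_eq0_Ichain; apply: heta; lia.
have [|h eh] := hIchain _ hIj; first lia.
by exists h; rewrite -eh; congr (contract _ (G _)); lia.
Qed.

Lemma Fcoef_solvable f : Ann (G 0) f ->
  exists eta, eta 0%N = f /\ forall d, (d < n)%N -> Fcoef G eta d = 0.
Proof.
move=> hf.
suff /(_ n) [eta [eta0 heta]] : forall D, exists eta, eta 0%N = f /\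
    forall d, (d < n)%N -> (d <= D)%N -> Fcoef G eta d = 0.
  by exists eta; split => // d hd; apply: heta; lia.
elim => [|D [eta [eta0 heta]]].
  exists (fun _ => f); split => // d _; rewrite leqn0 => /eqP ->.
  by rewrite /Fcoef big_ord1 subnn.
have [hD|hD] := ltnP D.+1 n; last first.
  by exists eta; split => // d hd hdD; apply: heta; lia.
have [h hh] := Fcoef_step_solvable hD (fun d hd => heta d (leq_ltn_trans hd (ltnW hD)) hd).
pose eta' j := if j == D.+1 then - h else eta j.
have eta'E d : (d <= D)%N -> Fcoef G eta' d = Fcoef G eta d.
  by move=> hd; apply: eq_Fcoef => j hj; rewrite /eta' ifF //; apply/eqP; lia.
exists eta'; split => // d hd; rewrite leq_eqVlt ltnS => /orP [/eqP ->|hdD].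
  rewrite FcoefS /eta' eqxx contractNl -hh.
  rewrite (eq_bigr (fun j : 'I_D.+1 => contract (eta j) (G (D.+1 - j)%N))) ?subrr // => j _.
  by rewrite ltn_eqF.
by rewrite eta'E ?heta.
Qed.

Lemma Ann_lift_modt f : (0 < n)%N -> Ann (G 0) f -> exists Psi, Ann F (liftS f - t * Psi).
Proof.
move=> n0 /Fcoef_solvable [eta [eta0 heta]].
have [n' en] : exists n', n = n'.+1 by exists n.-1; lia.
have := (@Ann_Fpoly_tsum _ _ n G eta n'.+1 (eq_leq en)).2 heta.
rewrite big_ord_recl expr0 mul1r eta0 => hA.
exists (- \sum_(i < n') t ^+ i * liftS (eta i.+1)); rewrite mulrN opprK mulr_sumr.
by under eq_bigr do rewrite mulrA -exprS.
Qed.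

End ChainHypothesis.

Lemma Ann_setT0_of_Ann_Fpoly_modt (Phi : S) m (a : 'I_m -> {poly k}) (c : 'I_m -> S) :
  (0 < n)%N -> (forall j, (a j)`_0 = 0) ->
  Ann F (Phi - \sum_(j < m) kt_to_S r (a j) * c j) -> Ann (G 0) (setT0 Phi).
Proof.
move=> hn a0 /Ann_Fpoly_Fcoef /(_ 0%N hn).
by rewrite /Fcoef big_ord1 subnn tcoef0_subr_kt_comb // setT0E.
Qed.

Lemma coexact_Fpoly : (0 < n)%N ->
  (forall f, Ann (G 0) f -> exists Psi, Ann F (liftS f - t * Psi)) -> coexact F (G 0).
Proof.
move=> hn hlift; split.
  by move=> g; exists (liftS g); rewrite setT0E tcoef0_liftS subrr /Ann contract0l.
move=> Phi; split; last by case=> m [a [c [a0 hA]]]; exact: Ann_setT0_of_Ann_Fpoly_modt hA.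
rewrite setT0E => /hlift [Psi hPsi].
have [rho ePhi] := tcoef0_split Phi.
exists 1%N, (fun _ => 'X), (fun _ => rho + Psi); split; first by rewrite coefX.
by rewrite big_ord1 kt_to_SX {1}ePhi mulrDr opprD addrA addrK.
Qed.

Lemma coexact_contract_span : (0 < n)%N -> coexact F (G 0) ->
  forall i, (1 <= i <= n - 1)%N -> forall f, Ichain G 0 f ->
    exists h : 'I_i -> R, contract f (G i) = \sum_(j < i) contract (h j) (G j).
Proof.
move=> hn [_ hker] i hi f hf.
have hf0 : Ann (G 0) (setT0 (liftS f)) by rewrite setT0E tcoef0_liftS.
have [m [a [c [a0 hA]]]] := (hker (liftS f)).1 hf0.
have hin : (i < n)%N by lia.
have := Ann_Fpoly_Fcoef hA hin; rewrite /Fcoef big_ord_recl.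
rewrite tcoef0_subr_kt_comb // tcoef0_liftS subn0 => /eqP; rewrite addr_eq0 => /eqP ->.
exists (fun j : 'I_i => - tcoef (i - j)%N (liftS f - \sum_(j < m) kt_to_S r (a j) * c j)).
rewrite (reindex_inj rev_ord_inj) /= -sumrN; apply: eq_bigr => j _.
rewrite contractNl; congr (- contract (tcoef _ _) (G _)); rewrite /bump /= add1n.
all: by have := ltn_ord j; lia.
Qed.

End Coexactness.

Section FreeBasis.
Variables (k : fieldType) (r n : nat) (G : nat -> {mpoly k[r]}).
Local Notation R := {mpoly k[r]}.
Local Notation S := {mpoly k[r.+1]}.
Local Notation t := (tvar k r).
Local Notation F := (Fpoly n G).

(* The basis of B = R/Ann(G_0) is made of the monomials whose class is not a
   combination of classes of monomials coming earlier in the enumeration [pickle]. *)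
Definition mon_dependent (a : 'X_{1..r}) : Prop := exists p : R,
  (forall b, b \in msupp p -> (pickle b < pickle a)%N) /\
  contract 'X_[a] (G 0) = contract p (G 0).

Definition basic_mon (a : 'X_{1..r}) : bool :=
  if excluded_middle_informative (mon_dependent a) then false else true.

Lemma basic_monN a : basic_mon a = false -> mon_dependent a.
Proof. by rewrite /basic_mon; case: excluded_middle_informative. Qed.

Lemma basic_mon_independent a : basic_mon a -> ~ mon_dependent a.
Proof. by rewrite /basic_mon; case: excluded_middle_informative. Qed.

Definition basic_idx := {a : 'X_{1..r} | basic_mon a}.

Definition in_spanB (g : R) : Prop := exists L : seq (basic_idx * k),
  Ann (G 0) (g - \sum_(x <- L) x.2 *: 'X_[val x.1]).

Lemma in_spanB_add g h : in_spanB g -> in_spanB h -> in_spanB (g + h).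
Proof.
move=> [L1 h1] [L2 h2]; exists (L1 ++ L2); rewrite big_cat /= opprD addrACA.
exact: AnnD.
Qed.

Lemma in_spanB_scale c g : in_spanB g -> in_spanB (c *: g).
Proof.
move=> [L h]; exists [seq (x.1, c * x.2) | x <- L]; rewrite big_map /=.
under eq_bigr do rewrite -scalerA.
by rewrite -scaler_sumr -scalerBr /Ann contractZl h scaler0.
Qed.

Lemma in_spanB_modAnn g g' : Ann (G 0) (g - g') -> in_spanB g' -> in_spanB g.
Proof. by move=> hg [L h]; exists L; rewrite -(subrK g' g) -addrA; apply: AnnD. Qed.

Lemma in_spanB_sum (T : eqType) (s : seq T) (Fn : T -> R) :
  (forall x, x \in s -> in_spanB (Fn x)) -> in_spanB (\sum_(x <- s) Fn x).
Proof.
elim: s => [|x s IH] h; first by exists [::]; rewrite !big_nil subr0 /Ann contract0l.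
rewrite big_cons; apply: in_spanB_add; first by apply: h; rewrite mem_head.
by apply: IH => y hy; apply: h; rewrite in_cons hy orbT.
Qed.

Lemma in_spanB_all g : in_spanB g.
Proof.
have spanX K a : (pickle a < K)%N -> in_spanB 'X_[a].
  elim: K a => [//|K IH] a ha; case basic_a: (basic_mon a).
    exists [:: (exist _ a basic_a, 1)].
    by rewrite big_seq1 /= scale1r subrr /Ann contract0l.
  have [p [hp hc]] := basic_monN basic_a.
  apply: (@in_spanB_modAnn _ p); first by rewrite /Ann contractBl hc subrr.
  rewrite [p]mpolyE; apply: in_spanB_sum => b hb; apply: in_spanB_scale.
  by apply: IH; have := hp b hb; lia.
rewrite [g]mpolyE; apply: in_spanB_sum => b _; apply: in_spanB_scale.
exact: (spanX (pickle b).+1).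
Qed.

Lemma msupp_basic_comb (s : seq basic_idx) (c : basic_idx -> k) b :
  b \in msupp (\sum_(i <- s) c i *: 'X_[val i] : R) -> exists2 i, i \in s & b = val i.
Proof.
elim: s => [|x s IH]; first by rewrite big_nil msupp0.
rewrite big_cons => /msuppD_le; rewrite mem_cat => /orP [|/IH [i hi ->]].
  by move/msuppZ_le; rewrite msuppX mem_seq1 => /eqP ->; exists x; rewrite ?mem_head.
by exists i; rewrite // in_cons hi orbT.
Qed.

Lemma indepB (l : seq basic_idx) (c : basic_idx -> k) : uniq l ->
  Ann (G 0) (\sum_(i <- l) c i *: 'X_[val i]) -> forall i, i \in l -> c i = 0.
Proof.
have pickle_inj : injective (fun i : basic_idx => pickle (val i)).
  by move=> i j /(pcan_inj pickleK) /val_inj.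
suff indepK K : forall s, uniq s -> (forall i, i \in s -> (pickle (val i) < K)%N) ->
    Ann (G 0) (\sum_(i <- s) c i *: 'X_[val i]) -> forall i, i \in s -> c i = 0.
  move=> ul; apply: (indepK (\sum_(i <- l) (pickle (val i)).+1)%N) => // i hi.
  by rewrite (big_rem i) //= ltnS leq_addr.
elim: K => [|K IH] s us hK hA; first by move=> i /hK.
have [/hasP [i0 hi0 /eqP pK]|hno] := boolP (has (fun i => pickle (val i) == K) s); last first.
  apply: IH => // i hi; have := hK i hi; rewrite ltnS leq_eqVlt => /orP [/eqP e|//].
  by case/negP: hno; apply/hasP; exists i => //; rewrite e.
have hrem i : i \in rem i0 s -> (pickle (val i) < K)%N.
  rewrite (mem_rem_uniq _ us) => /andP [ne hi].
  have := hK i hi; rewrite ltnS leq_eqVlt => /orP [/eqP e|//].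
  by case/negP: ne; apply/eqP/pickle_inj; rewrite /= e pK.
move: hA; rewrite (big_rem i0) //= => hA.
(* otherwise the monomial of largest index would depend on the others *)
have c0 : c i0 = 0.
  apply/eqP/negPn/negP => nz; apply: (basic_mon_independent (valP i0)).
  exists (- (c i0)^-1 *: \sum_(y <- rem i0 s) c y *: 'X_[val y]); split.
    by move=> b /msuppZ_le /msupp_basic_comb [i hi ->]; rewrite pK; exact: hrem.
  move/eqP: hA; rewrite /Ann contractDl contractZl addr_eq0 => /eqP h.
  rewrite contractZl -[X in _ = _ *: X]opprK -h.
  by rewrite scaleNr scalerN opprK scalerA mulVf // scale1r.
move: hA; rewrite c0 scale0r add0r => hA i hi.
have [->|ne] := eqVneq i i0; first exact: c0.
by apply: (IH (rem i0 s)); rewrite ?rem_uniq // (mem_rem_uniq _ us) inE ne.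
Qed.

Definition basis_lift (i : basic_idx) : S := liftS 'X_[val i].

Definition in_spanC (Phi : S) : Prop := exists L : seq (basic_idx * {poly k}),
  Ann F (Phi - \sum_(x <- L) kt_to_S r x.2 * basis_lift x.1).

Lemma in_spanC_add Phi Psi : in_spanC Phi -> in_spanC Psi -> in_spanC (Phi + Psi).
Proof.
move=> [L1 h1] [L2 h2]; exists (L1 ++ L2); rewrite big_cat /= opprD addrACA.
exact: AnnD.
Qed.

Lemma in_spanC_modAnn Phi Psi : Ann F (Phi - Psi) -> in_spanC Psi -> in_spanC Phi.
Proof. by move=> hPhi [L h]; exists L; rewrite -(subrK Psi Phi) -addrA; apply: AnnD. Qed.

Lemma in_spanC_sum (T : Type) (s : seq T) (Fn : T -> S) :
  (forall x, in_spanC (Fn x)) -> in_spanC (\sum_(x <- s) Fn x).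
Proof.
move=> h; elim: s => [|x s IH]; last by rewrite big_cons; apply: in_spanC_add.
by exists [::]; rewrite !big_nil subr0 /Ann contract0l.
Qed.

Section Spanning.
Hypothesis hlift : forall f, Ann (G 0) f -> exists Psi, Ann F (liftS f - t * Psi).

(* Descending induction on the power of t: t^j g is a combination of the basis
   up to t^(j+1) C, and t^n C = 0. *)
Lemma in_spanC_tpow j g : in_spanC (t ^+ j * liftS g).
Proof.
have [K] := ubnP (n - j); elim: K j g => [//|K IH] j g hK.
have [hj|hj] := leqP n j.
  by exists [::]; rewrite big_nil subr0; apply: Ann_Fpoly_tpow.
have [L hL] := in_spanB_all g; set e := g - _ in hL.
have [Psi hPsi] := hlift hL.
have -> : g = \sum_(x <- L) x.2 *: 'X_[val x.1] + e by rewrite /e addrC subrK.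
rewrite /liftS raddfD mulrDr; apply: in_spanC_add.
  exists [seq (x.1, x.2 *: 'X^j) | x <- L]; rewrite big_map.
  rewrite raddf_sum mulr_sumr -sumrB big1 ?/Ann ?contract0l // => x _ /=.
  by rewrite kt_to_S_monomial mwidenZ -scalerAl -scalerAr subrr.
apply: (@in_spanC_modAnn _ (t ^+ j.+1 * Psi)).
  by rewrite exprSr -mulrA -mulrBr; apply: Ann_mull.
rewrite (@tcoef_expansion _ _ Psi (msize Psi)) // mulr_sumr; apply: in_spanC_sum => i.
by rewrite mulrA -exprD; apply: IH; lia.
Qed.

Lemma in_spanC_all Phi : in_spanC Phi.
Proof.
rewrite (@tcoef_expansion _ _ Phi (msize Phi)) //.
by apply: in_spanC_sum => i; apply: in_spanC_tpow.
Qed.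

End Spanning.

Lemma basis_comb_uniq (L : seq (basic_idx * {poly k})) :
  exists (l : seq basic_idx) (a : basic_idx -> {poly k}), uniq l /\
    \sum_(i <- l) kt_to_S r (a i) * basis_lift i = \sum_(x <- L) kt_to_S r x.2 * basis_lift x.1.
Proof.
elim: L => [|[i p] L [l [a [ul hl]]]]; first by exists [::], (fun _ => 0); rewrite !big_nil.
rewrite big_cons /= -hl; have [hi|hi] := boolP (i \in l).
  exists l, (fun j => if j == i then p + a j else a j); split => //.
  rewrite (bigD1_seq i) //= eqxx [in RHS](bigD1_seq i) //= raddfD mulrDl -addrA.
  by congr (_ + (_ + _)); apply: eq_bigr => j /negbTE ->.
exists (i :: l), (fun j => if j == i then p else a j); split; first by rewrite cons_uniq hi.
rewrite big_cons eqxx; congr (_ + _); rewrite big_seq_cond [RHS]big_seq_cond.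
by apply: eq_bigr => j /andP [hj _]; case: eqP => // e; move: hi; rewrite -e hj.
Qed.

Lemma indepC (l : seq basic_idx) (a : basic_idx -> {poly k}) : uniq l ->
  Ann F (\sum_(i <- l) kt_to_S r (a i) * basis_lift i) -> forall i, i \in l -> ('X^n %| a i)%R.
Proof.
move=> ul hA; set N := (n + \sum_(i <- l) size (a i))%N.
have hsz i : i \in l -> (size (a i) <= N)%N by move=> hi; rewrite /N (big_rem i) //=; lia.
pose psi j := \sum_(i <- l) (a i)`_j *: ('X_[val i] : R).
have hexp : \sum_(i <- l) kt_to_S r (a i) * basis_lift i = \sum_(j < N) t ^+ j * liftS (psi j).
  rewrite big_seq.
  rewrite (eq_bigr (fun i => \sum_(j < N) ((a i)`_j *: t ^+ j) * basis_lift i)); last first.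
    by move=> i hi; rewrite (@kt_to_S_wide _ _ _ N (hsz i hi)) mulr_suml.
  rewrite -big_seq exchange_big /=; apply: eq_bigr => j _.
  rewrite /psi /liftS raddf_sum mulr_sumr; apply: eq_bigr => i _ /=.
  by rewrite mwidenZ -scalerAl -scalerAr.
move: hA; rewrite hexp => /(Ann_Fpoly_tsum _ _ (leq_addr _ _)) heqs.
have coef_low d : (d < n)%N -> psi d = 0 /\ forall i, i \in l -> (a i)`_d = 0.
  elim/ltn_ind: d => d IHd hd.
  have hann : Ann (G 0) (psi d).
    move: (heqs d hd); rewrite /Fcoef big_ord_recr /= subnn big1 ?add0r // => j _.
    by rewrite (IHd j (ltn_ord j) _).1 ?contract0l //; have := ltn_ord j; lia.
  have hc := indepB (c := fun i => (a i)`_d) ul hann.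
  by split => //; rewrite /psi big_seq big1 // => i hi; rewrite hc // scale0r.
move=> i hi; rewrite -(poly_take_drop n (a i)).
have -> : take_poly n (a i) = 0.
  apply/polyP => j; rewrite coef_take_poly coef0; case: ifP => // hj.
  exact: (coef_low j hj).2.
by rewrite add0r dvdp_mull.
Qed.

Lemma free_over_A_Fpoly :
  (forall f, Ann (G 0) f -> exists Psi, Ann F (liftS f - t * Psi)) -> free_over_A n F.
Proof.
move=> hlift; exists basic_idx, basis_lift; split=> [Phi|l a ul hA i hi].
  have [L hL] := in_spanC_all hlift Phi; have [l [a [_ e]]] := basis_comb_uniq L.
  by exists l, a; rewrite e.
exact: (@indepC l a ul hA i hi).
Qed.

End FreeBasis.

Theorem theorem2p1 (k : fieldType) (r n jB : nat)
  (FB : {mpoly k[r]}) (G : nat -> {mpoly k[r]}) :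
  (2 <= n)%N ->
  homog_of jB FB ->
  G 0%N = FB ->
  (forall i, (1 <= i <= n - 1)%N -> homog_of (jB + i) (G i)) ->
  ((forall i, (i < n)%N -> forall f, Ichain G i f ->
      exists h : {mpoly k[r]}, contract f (G (n - 1 - i)%N) = contract h FB) ->
     coexact (Fpoly n G) FB /\ free_extension n (Fpoly n G) FB)
  /\
  (free_extension n (Fpoly n G) FB ->
     forall i, (1 <= i <= n - 1)%N -> forall f, Ichain G 0 f ->
       exists h : 'I_i -> {mpoly k[r]},
         contract f (G i) = \sum_(j < i) contract (h j) (G j)).
Proof.
move=> n2 _ <- _; have n0 : (0 < n)%N by apply: leq_trans n2.
split=> [hIchain | [_ hcoex]]; last exact: coexact_contract_span.
have hlift f : Ann (G 0) f -> exists Psi, Ann (Fpoly n G) (liftS f - tvar k r * Psi).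
  exact: (Ann_lift_modt hIchain n0).
have hcoex := coexact_Fpoly n0 hlift.
by split=> //; split=> //; apply: free_over_A_Fpoly.
Qed.
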